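(* Let $\mathfrak{S}=(\mathcal{X},\mathsf{S},\gamma,(\Lambda_{a})_{a\in\mathcal{A}})$ be a spectral decomposition system for the Euclidean space $\mathfrak{H}$ and let $\varphi\in\Gamma_0(\mathcal{X})$ be $\mathsf{S}$-invariant. Then: (i) $\varphi\circ\gamma$ is essentially smooth if and only if $\varphi$ is essentially smooth; (ii) $\varphi\circ\gamma$ is essentially strictly convex if and only if $\varphi$ is essentially strictly convex; (iii) $\varphi\circ\gamma$ is a Legendre function if and only if $\varphi$ is a Legendre function.
   Context: A Euclidean space is a finite-dimensional real inner product space; inner products are written $\langle\cdot,\cdot\rangle$ and norms $\|\cdot\|$. Let $\mathfrak{H}$ and $\mathcal{X}$ be Euclidean spaces, let $\mathsf{S}$ be a group acting on $\mathcal{X}$ by linear isometries, let $\gamma\colon\mathfrak{H}\to\mathcal{X}$, and let $(\Lambda_a)_{a\in\mathcal{A}}$ be a family of linear operators from $\mathcal{X}$ to $\mathfrak{H}$. The orbit of $x$ is $\mathsf{S}\cdot x=\{s\cdot x: s\in\mathsf{S}\}$; a map $f$ on $\mathcal{X}$ is $\mathsf{S}$-invariant if $f(s\cdot x)=f(x)$ for all $s,x$. The tuple is a spectral decomposition system for $\mathfrak{H}$ if: [A] every $\Lambda_a$ is an isometry; [B] there exists an $\mathsf{S}$-invariant $\tau\colon\mathcal{X}\to\mathcal{X}$ with $\tau(x)\in\mathsf{S}\cdot x$ for all $x$ and $\gamma\circ\Lambda_a=\tau$ for all $a$; [C] for every $X\in\mathfrak{H}$ there is $a$ with $X=\Lambda_a\gamma(X)$;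 [D] $\langle X,Y\rangle\leq\langle\gamma(X),\gamma(Y)\rangle$ for all $X,Y\in\mathfrak{H}$. $\Gamma_0(\mathcal{H})$ is the set of proper lower semicontinuous convex functions $\mathcal{H}\to\left]-\infty,+\infty\right]$; $\partial g(x)=\{u:\langle z-x,u\rangle+g(x)\leq g(z)\ \forall z\}$. A function $g\in\Gamma_0(\mathcal{H})$ is essentially smooth if $\partial g(x)$ contains at most one element for every $x\in\mathcal{H}$; essentially strictly convex if it is strictly convex on every convex subset of $\operatorname{dom}\partial g=\{x:\partial g(x)\neq\varnothing\}$; a Legendre function if it is both. *)

From HB Require Import structures.
From mathcomp Require Import all_boot all_order all_algebra.
From mathcomp Require Import all_classical all_reals all_analysis.
Set Implicit Arguments. Unset Strict Implicit. Unset Printing Implicit Defensive.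
Import Order.TTheory GRing.Theory Num.Theory.
Import numFieldNormedType.Exports.
Local Open Scope ring_scope.
Local Open Scope classical_set_scope.

(* Euclidean spaces are modelled as row vectors 'rV[R]_n with the standard
   dot product (every Euclidean space is isometrically isomorphic to one). *)
Definition dotv (R : realType) (n : nat) (x y : 'rV[R]_n) : R :=
  \sum_(i < n) x ord0 i * y ord0 i.

Definition is_group (G : Type) (mul : G -> G -> G) (one : G) (inv : G -> G) :=
  [/\ forall a b c, mul a (mul b c) = mul (mul a b) c,
      forall a, mul one a = a, forall a, mul a one = a,
      forall a, mul (inv a) a = one & forall a, mul a (inv a) = one].

Definition linear_isometric_action (R : realType) (n : nat) (G : Type)
  (mul : G -> G -> G) (one : G) (act : G -> 'rV[R]_n -> 'rV[R]_n) :=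
  [/\ forall x, act one x = x,
      forall s t x, act (mul s t) x = act s (act t x),
      forall s (a : R) x y, act s (a *: x + y) = a *: act s x + act s y
    & forall s x, dotv (act s x) (act s x) = dotv x x].

Definition orbit_of (R : realType) (n : nat) (G : Type)
  (act : G -> 'rV[R]_n -> 'rV[R]_n) (x : 'rV[R]_n) : set 'rV[R]_n :=
  [set act s x | s in [set: G]].

Definition S_invariant (R : realType) (n : nat) (G : Type) (T : Type)
  (act : G -> 'rV[R]_n -> 'rV[R]_n) (f : 'rV[R]_n -> T) :=
  forall s x, f (act s x) = f x.

Definition linear_isometry (R : realType) (n m : nat)
  (L : 'rV[R]_n -> 'rV[R]_m) :=
  (forall (a : R) x y, L (a *: x + y) = a *: L x + L y) /\
  (forall x, dotv (L x) (L x) = dotv x x).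

(* Spectral decomposition system (X = 'rV_n, S = (G,act), gamma, Lambda)
   for H = 'rV_m. *)
Definition spectral_decomposition_system (R : realType) (m n : nat)
  (G : Type) (act : G -> 'rV[R]_n -> 'rV[R]_n)
  (gamma : 'rV[R]_m -> 'rV[R]_n) (A : Type)
  (Lambda : A -> 'rV[R]_n -> 'rV[R]_m) :=
  [/\ forall a, linear_isometry (Lambda a),
      (exists tau : 'rV[R]_n -> 'rV[R]_n,
          [/\ S_invariant act tau,
              forall x, orbit_of act x (tau x)
            & forall a x, gamma (Lambda a x) = tau x]),
      (forall X, exists a, X = Lambda a (gamma X))
    & forall X Y, dotv X Y <= dotv (gamma X) (gamma Y)].

Local Open Scope ereal_scope.

Definition proper_fun (R : realType) (n : nat) (f : 'rV[R]_n -> \bar R) :=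
  (forall x, f x != -oo) /\ (exists x, f x < +oo).

Definition convex_fun (R : realType) (n : nat) (f : 'rV[R]_n -> \bar R) :=
  forall (x y : 'rV[R]_n) (t : R), (0 < t < 1)%R ->
    f (t *: x + (1 - t) *: y)%R <= t%:E * f x + (1 - t)%:E * f y.

Definition Gamma0 (R : realType) (n : nat) (f : 'rV[R]_n -> \bar R) :=
  [/\ proper_fun f, lower_semicontinuous f & convex_fun f].

Definition subdiff (R : realType) (n : nat) (g : 'rV[R]_n -> \bar R)
  (x : 'rV[R]_n) : set 'rV[R]_n :=
  [set u | forall z, (dotv (z - x)%R u)%:E + g x <= g z].

Definition dom_subdiff (R : realType) (n : nat) (g : 'rV[R]_n -> \bar R) :
  set 'rV[R]_n := [set x | subdiff g x !=set0].

Definition convex_subset (R : realType) (n : nat) (C : set 'rV[R]_n) :=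
  forall (x y : 'rV[R]_n) (t : R), C x -> C y -> (0 < t < 1)%R -> C (t *: x + (1 - t) *: y)%R.

Definition strictly_convex_on (R : realType) (n : nat)
  (g : 'rV[R]_n -> \bar R) (C : set 'rV[R]_n) :=
  forall (x y : 'rV[R]_n) (t : R), C x -> C y -> x != y -> (0 < t < 1)%R ->
    g (t *: x + (1 - t) *: y)%R < t%:E * g x + (1 - t)%:E * g y.

Definition essentially_smooth (R : realType) (n : nat) (g : 'rV[R]_n -> \bar R) :=
  forall x u v, subdiff g x u -> subdiff g x v -> u = v.

Definition essentially_strictly_convex (R : realType) (n : nat)
  (g : 'rV[R]_n -> \bar R) :=
  forall C, convex_subset C -> C `<=` dom_subdiff g -> strictly_convex_on g C.

Definition legendre (R : realType) (n : nat) (g : 'rV[R]_n -> \bar R) :=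
  essentially_smooth g /\ essentially_strictly_convex g.

From HB Require Import structures.
From mathcomp Require Import all_boot all_order all_algebra.
From mathcomp Require Import all_classical all_reals all_analysis.
From mathcomp Require Import ring lra.
Import numFieldNormedType.Exports.
Set Implicit Arguments. Unset Strict Implicit. Unset Printing Implicit Defensive.
Import Order.TTheory GRing.Theory Num.Theory.
Local Open Scope ring_scope.
Local Open Scope classical_set_scope.

(** Subgradients transfer in both directions: [Lambda a] maps a subgradient
   [u] of [phi] at [x] to one of [phi \o gamma] at [Lambda a x] (by
   [<X, Y> <= <gamma X, gamma Y>] and the S-invariance of [phi]), and [gamma]
   maps a subgradient [U] of [phi \o gamma] at [X] to one of [phi] at
   [gamma X]. Essential smoothness says that the (convex) set of subgradients at
   a point is a single point; essential strict convexity says that points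
   sharing a subgradient along a segment coincide. The [Lambda a] are
   injective, and [gamma] preserves norms, so it cannot collapse a
   nondegenerate segment to a point; hence both properties pull back in each
   direction. *)

Section Dotv.
Variables (R : realType) (n : nat).
Implicit Types (x y z : 'rV[R]_n) (a t : R).

Lemma dotvC x y : dotv x y = dotv y x.
Proof. by apply: eq_bigr => i _; rewrite mulrC. Qed.

Lemma dotvDl x y z : dotv (x + y) z = dotv x z + dotv y z.
Proof. by rewrite -big_split; apply: eq_bigr => i _; rewrite !mxE mulrDl. Qed.

Lemma dotvZl a x z : dotv (a *: x) z = a * dotv x z.
Proof. by rewrite mulr_sumr; apply: eq_bigr => i _; rewrite !mxE mulrA. Qed.

Lemma dotvBl x y z : dotv (x - y) z = dotv x z - dotv y z.
Proof. by rewrite -scaleN1r dotvDl dotvZl mulN1r. Qed.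

Lemma dotvDr x y z : dotv z (x + y) = dotv z x + dotv z y.
Proof. by rewrite dotvC dotvDl !(dotvC z). Qed.

Lemma dotvZr a x z : dotv z (a *: x) = a * dotv z x.
Proof. by rewrite dotvC dotvZl dotvC. Qed.

Lemma dotvBr x y z : dotv z (x - y) = dotv z x - dotv z y.
Proof. by rewrite dotvC dotvBl !(dotvC z). Qed.

Lemma dotvv_eq0 x : (dotv x x == 0) = (x == 0).
Proof.
apply/idP/eqP => [|->]; last by rewrite /dotv big1 // => i _; rewrite mxE mul0r.
rewrite psumr_eq0 => [/allP x0|i _]; last by rewrite -expr2 sqr_ge0.
apply/rowP => i; have := x0 i (mem_index_enum i).
by rewrite /= -expr2 sqrf_eq0 (ord1 ord0) mxE => /eqP.
Qed.

Lemma dotv_convex_comb t x y :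
  dotv (t *: x + (1 - t) *: y) (t *: x + (1 - t) *: y) =
  t * dotv x x + (1 - t) * dotv y y - t * (1 - t) * dotv (x - y) (x - y).
Proof.
by rewrite !(dotvBl, dotvBr, dotvDl, dotvDr, dotvZl, dotvZr) (dotvC y x); ring.
Qed.

Lemma eq_of_dotv_convex_comb t x y : 0 < t < 1 ->
  dotv x x = dotv y y ->
  dotv (t *: x + (1 - t) *: y) (t *: x + (1 - t) *: y) = dotv x x -> x = y.
Proof.
move=> /andP[t0 t1] exy; rewrite dotv_convex_comb -exy => e.
have /eqP : t * (1 - t) * dotv (x - y) (x - y) = 0 by lra.
rewrite !mulf_eq0 (gt_eqF t0) subr_eq0 (gt_eqF t1) dotvv_eq0 subr_eq0 /=.
by move/eqP.
Qed.

End Dotv.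

Section LinearIsometry.
Variables (R : realType) (n k : nat) (L : 'rV[R]_n -> 'rV[R]_k).
Hypothesis L_iso : linear_isometry L.

Lemma linear_isometry0 : L 0 = 0.
Proof.
have := L_iso.1 1 0 0; rewrite !scale1r addr0 => L00.
by apply: (addrI (L 0)); rewrite addr0 -L00.
Qed.

Lemma linear_isometryZ a x : L (a *: x) = a *: L x.
Proof. by have := L_iso.1 a x 0; rewrite !addr0 linear_isometry0 addr0. Qed.

Lemma linear_isometryB x y : L (x - y) = L x - L y.
Proof. by rewrite addrC -scaleN1r L_iso.1 scaleN1r addrC. Qed.

(* polarization *)
Lemma linear_isometry_dotv x y : dotv (L x) (L y) = dotv x y.
Proof.
have := L_iso.2 (1 *: x + y); rewrite L_iso.1 !scale1r !(dotvDl, dotvDr).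
by rewrite !L_iso.2 (dotvC (L y)) (dotvC y); lra.
Qed.

Lemma linear_isometry_inj : injective L.
Proof.
move=> x y Lxy; apply/eqP; rewrite -subr_eq0 -dotvv_eq0.
by rewrite -linear_isometry_dotv linear_isometryB Lxy subrr dotvv_eq0.
Qed.

Lemma convex_subset_image C : convex_subset C -> convex_subset (L @` C).
Proof.
move=> Cconv _ _ t [x Cx <-] [y Cy <-] t01.
exists (t *: x + (1 - t) *: y); first exact: Cconv.
by rewrite L_iso.1 linear_isometryZ.
Qed.

End LinearIsometry.

Local Open Scope ereal_scope.

Section Subdifferential.
Variables (R : realType) (n : nat) (g : 'rV[R]_n -> \bar R).
Implicit Types (x y z u : 'rV[R]_n) (t : R).

Lemma convex_subdiff x : convex_subset (subdiff g x).
Proof.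
move=> u v t hu hv /andP[t0 t1] z; rewrite dotvDr !dotvZr.
have [le|le] := lerP (dotv (z - x) u) (dotv (z - x) v).
- by apply: le_trans (hv z); apply: leeD2r; rewrite lee_fin; nra.
- by apply: le_trans (hu z); apply: leeD2r; rewrite lee_fin; nra.
Qed.

Lemma subdiff_of_tangent m x u :
  subdiff g m u -> g x <= (dotv (x - m)%R u)%:E + g m -> subdiff g x u.
Proof.
move=> hm gx z; apply: le_trans (hm z).
apply: le_trans (leeD2l _ gx) _.
by rewrite addeA -EFinD -dotvDl addrA subrK.
Qed.

Hypothesis g_proper : proper_fun g.

Lemma subdiff_fin x u : subdiff g x u -> exists r, g x = r%:E.
Proof.
case: g_proper => gN [x0 gx0] hu; move: (gN x) (hu x0).
case: (g x) => [r _ _|_|//]; first by exists r.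
by rewrite addey // => le; have := lt_le_trans gx0 le; rewrite ltxx.
Qed.

Lemma common_subdiff_chord_le p q u t :
  subdiff g p u -> subdiff g q u -> (0 < t < 1)%R ->
  t%:E * g p + (1 - t)%:E * g q <= g (t *: p + (1 - t) *: q)%R.
Proof.
move=> hp hq /andP[t0 t1].
have [a ga] := subdiff_fin hp; have [b gb] := subdiff_fin hq.
have := hp (t *: p + (1 - t) *: q)%R; have := hq (t *: p + (1 - t) *: q)%R.
rewrite ga gb -!EFinM -EFinD.
case: (g _) (g_proper.1 (t *: p + (1 - t) *: q)%R) => [r _|_ _ _|//];
  last exact: leey.
rewrite -!EFinD !lee_fin !(dotvBl, dotvDl, dotvZl); nra.
Qed.

Lemma convex_subdiff_fiber u :
  convex_fun g -> convex_subset [set x | subdiff g x u].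
Proof.
move=> g_convex x y t hx hy t01 z /=.
have [a gx] := subdiff_fin hx; have [b gy] := subdiff_fin hy.
apply: le_trans (leeD2l _ (g_convex x y t t01)) _.
have := hx z; have := hy z; rewrite gx gy -!EFinM -EFinD.
case: (g z) (g_proper.1 z) => [r _|_ _ _|//]; last exact: leey.
rewrite -!EFinD !lee_fin !(dotvBl, dotvDl, dotvZl).
by move: t01 => /andP[t0 t1]; nra.
Qed.

(* Strict convexity on the convex set [C] contradicts [common_subdiff_chord_le]
   unless [C] is a single point. *)
Lemma ess_strictly_convex_common_subdiff C u p q :
  essentially_strictly_convex g -> convex_subset C ->
  (forall x, C x -> subdiff g x u) -> C p -> C q -> p = q.
Proof.
move=> g_esc Cconv Cu Cp Cq; have [//|pq] := eqVneq p q.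
have half01 : (0 < (2^-1 : R) < 1)%R by apply/andP; split; lra.
have Cdom : C `<=` dom_subdiff g by move=> x /Cu hx; exists u.
have := g_esc C Cconv Cdom p q _ Cp Cq pq half01.
move/lt_le_trans/(_ (common_subdiff_chord_le (Cu p Cp) (Cu q Cq) half01)).
by rewrite ltxx.
Qed.

(* If [g] is not strictly convex along a segment in [dom_subdiff g], a
   subgradient at an interior point is a subgradient at both endpoints. *)
Lemma ess_strictly_convex_of_segments :
  (forall x y u t, (0 < t < 1)%R -> subdiff g x u -> subdiff g y u ->
     subdiff g (t *: x + (1 - t) *: y)%R u -> x = y) ->
  essentially_strictly_convex g.
Proof.
move=> flat C Cconv Cdom x y t Cx Cy xy t01; have /andP[t0 t1] := t01.
set m := (t *: x + (1 - t) *: y)%R.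
have [u hu] := Cdom m (Cconv x y t Cx Cy t01).
have [[v hv] [w hw]] := (Cdom x Cx, Cdom y Cy).
have [a gx] := subdiff_fin hv; have [b gy] := subdiff_fin hw.
have [c gm] := subdiff_fin hu.
have xm : (x - m = (1 - t) *: (x - y))%R.
  by rewrite /m; apply/rowP => i; rewrite !mxE; ring.
have ym : (y - m = - t *: (x - y))%R.
  by rewrite /m; apply/rowP => i; rewrite !mxE; ring.
rewrite gx gy gm -!EFinM -EFinD lte_fin ltNge; apply/negP => chord_le.
have := hu x; rewrite gx gm -EFinD lee_fin xm dotvZl => hx.
have := hu y; rewrite gy gm -EFinD lee_fin ym dotvZl => hy.
move/eqP: xy; apply; apply: (flat x y u t t01 _ _ hu).
- apply: subdiff_of_tangent hu _.
  by rewrite gx gm -EFinD lee_fin xm dotvZl; nra.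
- apply: subdiff_of_tangent hu _.
  by rewrite gy gm -EFinD lee_fin ym dotvZl; nra.
Qed.

End Subdifferential.

Section SpectralDecomposition.
Variables (R : realType) (m n : nat) (G : Type) (mul : G -> G -> G) (one : G)
  (inv : G -> G) (act : G -> 'rV[R]_n -> 'rV[R]_n)
  (gamma : 'rV[R]_m -> 'rV[R]_n) (A : Type)
  (Lambda : A -> 'rV[R]_n -> 'rV[R]_m) (phi : 'rV[R]_n -> \bar R).
Hypotheses (group : is_group mul one inv)
  (action : linear_isometric_action mul one act)
  (sds : spectral_decomposition_system act gamma Lambda)
  (phi_inv : S_invariant act phi).

Lemma act_linear_isometry s : linear_isometry (act s).
Proof. by case: action => _ _ lin iso; split; [exact: lin | exact: iso]. Qed.

Lemma act_actV s x : act s (act (inv s) x) = x.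
Proof.
case: group => _ _ _ _ mulV; case: action => act1 actM _ _.
by rewrite -actM mulV.
Qed.

Lemma Lambda_linear_isometry a : linear_isometry (Lambda a).
Proof. by case: sds. Qed.

Lemma gamma_Lambda_orbit a x : orbit_of act x (gamma (Lambda a x)).
Proof. by case: sds => _ [tau [_ tau_orbit ->]]. Qed.

Lemma Lambda_gamma X : exists a, X = Lambda a (gamma X).
Proof. by case: sds. Qed.

Lemma dotv_le_gamma X Y : (dotv X Y <= dotv (gamma X) (gamma Y))%R.
Proof. by case: sds. Qed.

Lemma dotv_gamma X : dotv (gamma X) (gamma X) = dotv X X.
Proof.
have [a eX] := Lambda_gamma X.
by rewrite [in RHS]eX (linear_isometry_dotv (Lambda_linear_isometry a)).
Qed.

Lemma phi_gamma_Lambda a x : phi (gamma (Lambda a x)) = phi x.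
Proof. by have [s _ <-] := gamma_Lambda_orbit a x; exact: phi_inv. Qed.

Lemma proper_comp_gamma : proper_fun phi -> proper_fun (phi \o gamma).
Proof.
move=> [phiN [x phix]]; split => [X|]; first exact: phiN.
have [a _] := Lambda_gamma 0.
by exists (Lambda a x); rewrite /= phi_gamma_Lambda.
Qed.

(* If [gamma (Lambda a u) = act s u], then [act (inv s) (gamma Z)] has the same
   [phi]-value as [gamma Z] and pairs with [u] as [gamma Z] pairs with
   [gamma (Lambda a u)]. *)
Lemma subdiff_comp_Lambda a x u :
  subdiff phi x u -> subdiff (phi \o gamma) (Lambda a x) (Lambda a u).
Proof.
move=> hu Z /=; rewrite phi_gamma_Lambda.
have [s _ su] := gamma_Lambda_orbit a u.
set w := act (inv s) (gamma Z).
have -> : phi (gamma Z) = phi w by rewrite /w phi_inv.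
apply: le_trans (hu w); apply: leeD2r; rewrite lee_fin !dotvBl.
rewrite (linear_isometry_dotv (Lambda_linear_isometry a)) lerD2r.
rewrite -(linear_isometry_dotv (act_linear_isometry s)) act_actV su.
exact: dotv_le_gamma.
Qed.

Lemma subdiff_gamma X U :
  subdiff (phi \o gamma) X U -> subdiff phi (gamma X) (gamma U).
Proof.
move=> hU z; have [b Ub] := Lambda_gamma U.
rewrite -(phi_gamma_Lambda b z); apply: le_trans (hU (Lambda b z)).
apply: leeD2r; rewrite lee_fin !dotvBl.
have -> : dotv (Lambda b z) U = dotv z (gamma U).
  by rewrite {1}Ub (linear_isometry_dotv (Lambda_linear_isometry b)).
by rewrite lerD2l lerN2 dotv_le_gamma.
Qed.

Lemma ess_smooth_of_comp :
  essentially_smooth (phi \o gamma) -> essentially_smooth phi.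
Proof.
move=> smooth x u v hu hv; have [a _] := Lambda_gamma 0.
apply: (linear_isometry_inj (Lambda_linear_isometry a)).
exact: smooth (subdiff_comp_Lambda a hu) (subdiff_comp_Lambda a hv).
Qed.

(* All subgradients at [X] have the same image under the norm-preserving
   [gamma], and they form a convex set. *)
Lemma ess_smooth_comp :
  essentially_smooth phi -> essentially_smooth (phi \o gamma).
Proof.
move=> smooth X U V hU hV.
have half01 : (0 < (2^-1 : R) < 1)%R by apply/andP; split; lra.
have hW := convex_subdiff hU hV half01.
have gammaV := smooth _ _ _ (subdiff_gamma hU) (subdiff_gamma hV).
have gammaW := smooth _ _ _ (subdiff_gamma hU) (subdiff_gamma hW).
apply: (eq_of_dotv_convex_comb half01).
  by rewrite -(dotv_gamma U) -(dotv_gamma V) gammaV.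
by rewrite -dotv_gamma -gammaW dotv_gamma.
Qed.

Lemma ess_strictly_convex_of_comp : proper_fun phi -> convex_fun phi ->
  essentially_strictly_convex (phi \o gamma) -> essentially_strictly_convex phi.
Proof.
move=> phi_proper phi_convex esc.
apply: ess_strictly_convex_of_segments => // x y u t _ hx hy _.
have [a _] := Lambda_gamma 0.
have Lambda_iso := Lambda_linear_isometry a.
apply: (linear_isometry_inj Lambda_iso).
apply: (ess_strictly_convex_common_subdiff (proper_comp_gamma phi_proper) esc
  (convex_subset_image Lambda_iso
     (convex_subdiff_fiber (u := u) phi_proper phi_convex))).
- by move=> _ [w hw <-]; exact: subdiff_comp_Lambda.
- by exists x.
- by exists y.
Qed.

Lemma ess_strictly_convex_comp : proper_fun phi -> convex_fun phi ->
  essentially_strictly_convex phi -> essentially_strictly_convex (phi \o gamma).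
Proof.
move=> phi_proper phi_convex esc.
apply: ess_strictly_convex_of_segments; first exact: proper_comp_gamma.
move=> X Y U t t01 hX hY hM.
have gammaX Z : subdiff (phi \o gamma) Z U -> gamma Z = gamma X.
  move=> hZ; apply: (ess_strictly_convex_common_subdiff (u := gamma U)
    phi_proper esc (convex_subdiff_fiber (u := gamma U) phi_proper phi_convex)).
  - by move=> x.
  - exact: subdiff_gamma.
  - exact: subdiff_gamma.
apply: (eq_of_dotv_convex_comb t01).
  by rewrite -(dotv_gamma X) -(dotv_gamma Y) (gammaX Y hY).
by rewrite -dotv_gamma (gammaX _ hM) dotv_gamma.
Qed.

End SpectralDecomposition.

Theorem proposition6p1 (R : realType) (m n : nat)
  (G : Type) (mul : G -> G -> G) (one : G) (inv : G -> G)
  (act : G -> 'rV[R]_n -> 'rV[R]_n)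
  (gamma : 'rV[R]_m -> 'rV[R]_n) (A : Type)
  (Lambda : A -> 'rV[R]_n -> 'rV[R]_m)
  (phi : 'rV[R]_n -> \bar R) :
  is_group mul one inv ->
  linear_isometric_action mul one act ->
  spectral_decomposition_system act gamma Lambda ->
  Gamma0 phi -> S_invariant act phi ->
  [/\ essentially_smooth (phi \o gamma) <-> essentially_smooth phi,
      essentially_strictly_convex (phi \o gamma) <-> essentially_strictly_convex phi
    & legendre (phi \o gamma) <-> legendre phi].
Proof.
move=> group action sds [phi_proper _ phi_convex] phi_inv.
have smooth : essentially_smooth (phi \o gamma) <-> essentially_smooth phi.
  split; [exact: ess_smooth_of_comp group action sds phi_inv |
          exact: ess_smooth_comp sds phi_inv].
have esc : essentially_strictly_convex (phi \o gamma) <->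
           essentially_strictly_convex phi.
  split; [exact: ess_strictly_convex_of_comp group action sds phi_inv
                   phi_proper phi_convex |
          exact: ess_strictly_convex_comp sds phi_inv phi_proper phi_convex].
by split=> //; rewrite /legendre smooth esc.
Qed.
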